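(* For $i=1,2$ let $\delta_i:[0,1]\to[0,1]$ be the diagonal section of some 2-copula such that $t\mapsto\delta_i(t)/t$ is increasing on $(0,1]$ and $t\mapsto\delta_i(t)/t^2$ is decreasing on $(0,1]$, and let $C_i(u_1,u_2)=\min(u_1,u_2)\,\delta_i(\max(u_1,u_2))/\max(u_1,u_2)$ (with $C_i(0,0)=0$) be the corresponding semilinear copulas. If $C_1<_{TD}C_2$, then $C_1\le_{loc}C_2$.
   Context: A 2-copula is a grounded, 2-increasing function $C:[0,1]^2\to[0,1]$ with uniform margins; its diagonal section is $\delta(t)=C(t,t)$. Under the stated monotonicity conditions, the semilinear function $C_i$ is a 2-copula with diagonal $\delta_i$, and it admits the tail dependence function $\Lambda(\boldsymbol w;C_i)=\min(w_1,w_2)\lim_{t\searrow0}\delta_i(t)/t$. In general $\Lambda(\boldsymbol w;C)=\lim_{s\searrow0}C(s\boldsymbol w)/s$. $C_1<_{TD}C_2$ means $\Lambda(\boldsymbol w;C_1)<\Lambda(\boldsymbol w;C_2)$ for all $\boldsymbol w\in(0,\infty)^2$. $C_1\le_{loc}C_2$ means there is $\varepsilon>0$ with $C_1\le C_2$ on $B_\varepsilon(\boldsymbol 0)\cap[0,1]^2$ (Euclidean ball). *)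

From Stdlib Require Import Reals Lra.
From Coquelicot Require Import Coquelicot.
Open Scope R_scope.

Definition in01 (x : R) : Prop := 0 <= x <= 1.

Definition is_copula2 (C : R -> R -> R) : Prop :=
  (forall u v, in01 u -> in01 v -> in01 (C u v)) /\
  (forall u, in01 u -> C u 0 = 0 /\ C 0 u = 0) /\
  (forall u, in01 u -> C u 1 = u /\ C 1 u = u) /\
  (forall u1 u2 v1 v2, in01 u1 -> in01 u2 -> in01 v1 -> in01 v2 ->
     u1 <= u2 -> v1 <= v2 ->
     0 <= C u2 v2 - C u2 v1 - C u1 v2 + C u1 v1).

Definition is_diagonal_of_copula (delta : R -> R) : Prop :=
  exists C, is_copula2 C /\ forall t, in01 t -> delta t = C t t.

Definition incr_on_0_1 (f : R -> R) : Prop :=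
  forall s t, 0 < s -> s <= t -> t <= 1 -> f s <= f t.
Definition decr_on_0_1 (f : R -> R) : Prop :=
  forall s t, 0 < s -> s <= t -> t <= 1 -> f t <= f s.

Definition semilinear (delta : R -> R) (u v : R) : R :=
  if Req_EM_T (Rmax u v) 0 then 0
  else Rmin u v * delta (Rmax u v) / Rmax u v.

Definition is_tdf (C : R -> R -> R) (w1 w2 l : R) : Prop :=
  filterlim (fun s => C (s * w1) (s * w2) / s) (at_right 0) (locally l).

Definition TD_lt (C1 C2 : R -> R -> R) : Prop :=
  forall w1 w2, 0 < w1 -> 0 < w2 ->
    exists l1 l2, is_tdf C1 w1 w2 l1 /\ is_tdf C2 w1 w2 l2 /\ l1 < l2.

Definition loc_le (C1 C2 : R -> R -> R) : Prop :=
  exists eps, 0 < eps /\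
    forall u v, in01 u -> in01 v -> sqrt (u ^ 2 + v ^ 2) < eps ->
      C1 u v <= C2 u v.

(* Along the diagonal, [C_i(s,s)/s = delta_i(s)/s], so the strict tail-dependence
   inequality at [w = (1,1)] gives [delta_1(s)/s < delta_2(s)/s] for all small [s > 0].
   Since [C_i(u,v) = min(u,v) * delta_i(m)/m] with [m = max(u,v) <= |(u,v)|], this
   inequality at [m] yields [C_1 <= C_2] on a small ball around the origin. *)
From Stdlib Require Import Reals Lra.
From Coquelicot Require Import Coquelicot.
Open Scope R_scope.

Lemma filterlim_eventually_lt {T : Type} (F : (T -> Prop) -> Prop) {FF : Filter F}
    (f g : T -> R) (l1 l2 : R) :
  filterlim f F (locally l1) -> filterlim g F (locally l2) -> l1 < l2 ->
  F (fun x => f x < g x).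
Proof.
  intros Hf Hg Hl.
  assert (Heps : 0 < (l2 - l1) / 2) by lra.
  pose (eps := mkposreal _ Heps).
  apply filterlim_locally with (eps := eps) in Hf.
  apply filterlim_locally with (eps := eps) in Hg.
  generalize (filter_and _ _ Hf Hg); apply filter_imp.
  intros x [Bf Bg].
  apply Rabs_def2 in Bf; apply Rabs_def2 in Bg.
  simpl in Bf, Bg; unfold minus, plus, opp in Bf, Bg; simpl in Bf, Bg.
  lra.
Qed.

Lemma at_right_ex_interval (x : R) (P : R -> Prop) :
  at_right x P -> exists d, 0 < d /\ forall s, x < s < x + d -> P s.
Proof.
  intros [d Hd].
  exists d; split; [apply cond_pos |].
  intros s Hs; apply Hd; [| lra].
  unfold ball; simpl; unfold AbsRing_ball, abs, minus, plus, opp; simpl.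
  rewrite Rabs_pos_eq; lra.
Qed.

Lemma semilinear_diag (delta : R -> R) (s : R) :
  0 < s -> semilinear delta s s = delta s.
Proof.
  intros Hs; unfold semilinear.
  rewrite Rmax_left, Rmin_left by lra.
  destruct (Req_EM_T s 0); [lra | field; lra].
Qed.

Lemma TD_lt_semilinear_diag_ratio (delta1 delta2 : R -> R) :
  TD_lt (semilinear delta1) (semilinear delta2) ->
  exists d, 0 < d /\ forall s, 0 < s < d -> delta1 s / s < delta2 s / s.
Proof.
  intros HTD.
  destruct (HTD 1 1 Rlt_0_1 Rlt_0_1) as [l1 [l2 [H1 [H2 Hl]]]].
  assert (Hdiag : forall delta l, is_tdf (semilinear delta) 1 1 l ->
                    filterlim (fun s => delta s / s) (at_right 0) (locally l)).
  { intros delta l H.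
    apply (filterlim_ext_loc (fun s => semilinear delta (s * 1) (s * 1) / s)); [| exact H].
    exists (mkposreal 1 Rlt_0_1); intros s _ Hs.
    rewrite Rmult_1_r, semilinear_diag by exact Hs; reflexivity. }
  destruct (at_right_ex_interval 0 _
              (filterlim_eventually_lt _ _ _ _ _ (Hdiag _ _ H1) (Hdiag _ _ H2) Hl))
    as [d [Hd Hlt]].
  exists d; split; [exact Hd |].
  intros s Hs; apply Hlt; lra.
Qed.

Lemma Rmax_le_sqrt_sum_sq (u v : R) :
  0 <= u -> 0 <= v -> Rmax u v <= sqrt (u ^ 2 + v ^ 2).
Proof.
  intros Hu Hv.
  rewrite <- (sqrt_pow2 (Rmax u v)) by (apply Rmax_case; lra).
  apply sqrt_le_1_alt.
  apply Rmax_case; simpl; nra.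
Qed.

Lemma semilinear_le (delta1 delta2 : R -> R) (u v : R) :
  0 <= u -> 0 <= v ->
  (0 < Rmax u v -> delta1 (Rmax u v) / Rmax u v <= delta2 (Rmax u v) / Rmax u v) ->
  semilinear delta1 u v <= semilinear delta2 u v.
Proof.
  intros Hu Hv Hratio; unfold semilinear.
  destruct (Req_EM_T (Rmax u v) 0) as [E | E]; [lra |].
  assert (Hm : 0 < Rmax u v) by (pose proof (Rmax_l u v); lra).
  assert (Hmin : 0 <= Rmin u v) by (apply Rmin_glb; lra).
  unfold Rdiv in *; rewrite !Rmult_assoc.
  apply Rmult_le_compat_l; [exact Hmin | exact (Hratio Hm)].
Qed.

Theorem mainTheorem8 (delta1 delta2 : R -> R) :
  is_diagonal_of_copula delta1 -> is_diagonal_of_copula delta2 ->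
  incr_on_0_1 (fun t => delta1 t / t) -> decr_on_0_1 (fun t => delta1 t / t ^ 2) ->
  incr_on_0_1 (fun t => delta2 t / t) -> decr_on_0_1 (fun t => delta2 t / t ^ 2) ->
  TD_lt (semilinear delta1) (semilinear delta2) ->
  loc_le (semilinear delta1) (semilinear delta2).
Proof.
  (* The copula and monotonicity hypotheses only make [C_i] a copula; the comparison does not need them. *)
  intros _ _ _ _ _ _ HTD.
  destruct (TD_lt_semilinear_diag_ratio _ _ HTD) as [d [Hd Hlt]].
  exists d; split; [exact Hd |].
  intros u v [Hu _] [Hv _] Hnorm.
  apply semilinear_le; [exact Hu | exact Hv |].
  intros Hm; apply Rlt_le, Hlt; split; [exact Hm |].
  eapply Rle_lt_trans; [apply Rmax_le_sqrt_sum_sq | exact Hnorm]; assumption.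
Qed.
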